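(* Let $\mathcal{A}$ be a non-unital Banach algebra. Then every approximately right invertible element $x\in\mathcal{A}$ is a left topological divisor of zero, i.e. $\inf\{\|xy\| : y\in\mathcal{A},\ \|y\|=1\}=0$.
   Context: An approximate identity in $\mathcal{A}$ is a net $(e_j)_{j\in J}$ with $\lim_j e_jy=\lim_j ye_j=y$ for all $y\in\mathcal{A}$. An element $x$ is approximately right invertible if there is a net $(r_j)$ in $\mathcal{A}$ such that $(xr_j)$ is an approximate identity in $\mathcal{A}$. *)

From HB Require Import structures.
From mathcomp Require Import all_boot all_order all_algebra.
From mathcomp Require Import all_classical all_reals all_analysis.
Set Implicit Arguments. Unset Strict Implicit. Unset Printing Implicit Defensive.
Import Order.TTheory GRing.Theory Num.Theory.
Import numFieldNormedType.Exports.
Local Open Scope ring_scope.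

Record banach_algebra (K : numFieldType) (V : completeNormedModType K)
    (mul : V -> V -> V) : Prop := BanachAlgebra {
  ba_mulA : forall u v w, mul u (mul v w) = mul (mul u v) w;
  ba_linl : forall (a : K) u v w, mul (a *: u + v) w = a *: mul u w + mul v w;
  ba_linr : forall (a : K) u v w, mul u (a *: v + w) = a *: mul u v + mul u w;
  ba_normM : forall u v, `|mul u v| <= `|u| * `|v|
}.

Definition non_unital (K : numFieldType) (V : completeNormedModType K)
    (mul : V -> V -> V) : Prop :=
  ~ exists e : V, forall y, mul e y = y /\ mul y e = y.

Definition directed_set (J : Type) (le : J -> J -> Prop) : Prop :=
  [/\ (forall i, le i i),
      (forall i j k, le i j -> le j k -> le i k),
      (exists j : J, True) &
      (forall i j, exists k, le i k /\ le j k)].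

Definition net_lim (K : numFieldType) (V : normedModType K)
    (J : Type) (le : J -> J -> Prop) (u : J -> V) (l : V) : Prop :=
  forall eps : K, 0 < eps -> exists j0, forall j, le j0 j -> `|u j - l| < eps.

Definition approx_identity (K : numFieldType) (V : completeNormedModType K)
    (mul : V -> V -> V) (J : Type) (le : J -> J -> Prop) (e : J -> V) : Prop :=
  forall y : V, net_lim le (fun j => mul (e j) y) y /\
                net_lim le (fun j => mul y (e j)) y.

Definition approx_right_invertible (K : numFieldType)
    (V : completeNormedModType K) (mul : V -> V -> V) (x : V) : Prop :=
  exists (J : Type) (le : J -> J -> Prop) (r : J -> V),
    directed_set le /\ approx_identity mul le (fun j => mul x (r j)).

Definition left_top_divisor_of_zero (K : numFieldType)
    (V : completeNormedModType K) (mul : V -> V -> V) (x : V) : Prop :=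
  forall eps : K, 0 < eps -> exists y : V, `|y| = 1 /\ `|mul x y| < eps.

From HB Require Import structures.
From mathcomp Require Import all_boot all_order all_algebra.
From mathcomp Require Import all_classical all_reals all_analysis.
Set Implicit Arguments. Unset Strict Implicit.
Unset Printing Implicit Defensive.
Import Order.TTheory GRing.Theory Num.Theory.
Import numFieldNormedType.Exports.
Local Open Scope ring_scope.

(* If x is not a left topological divisor of
   zero, then x is bounded below: c |z| <= |x z| for some c > 0.  Let (r_j)
   be a net with (x r_j) an approximate identity and put w_j := r_j x.  Then
   x w_j = (x r_j) x converges to x, hence is Cauchy, hence (x being bounded
   below) w_j is Cauchy and converges to some u by completeness.  Continuity
   of left multiplication and uniqueness of net limits give x u = x, and
   cancelling x on the left yields u y = y for all y.  Finally z := y u - y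
   satisfies z x = 0, so the net z (x r_j) = (z x) r_j is constantly 0 while
   converging to z; thus y u = y, and u is a unit: a contradiction. *)

Section Nets.
Variables (K : numFieldType) (V : normedModType K).
Variables (J : Type) (le : J -> J -> Prop).
Hypothesis hle : directed_set le.

Definition net_cauchy (w : J -> V) : Prop :=
  forall eps : K, 0 < eps ->
    exists j0, forall j, le j0 j -> `|w j0 - w j| < eps.

Lemma norm_small_eq0 (v : V) : (forall e : K, 0 < e -> `|v| < e) -> v = 0.
Proof.
move=> hv; apply/normr0_eq0/eqP; rewrite eq_le normr_ge0 andbT.
by apply/ler_addgt0Pr => e e0; rewrite add0r ltW ?hv.
Qed.

Lemma net_lim_unique (w : J -> V) (l1 l2 : V) :
  net_lim le w l1 -> net_lim le w l2 -> l1 = l2.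
Proof.
case: hle => _ _ _ ub hl1 hl2; apply/eqP; rewrite -subr_eq0; apply/eqP.
apply: norm_small_eq0 => e e0.
have e20 : 0 < e / 2%:R by rewrite divr_gt0 ?ltr0Sn.
have [j1 hj1] := hl1 _ e20; have [j2 hj2] := hl2 _ e20.
have [k [k1 k2]] := ub j1 j2.
have -> : l1 - l2 = (w k - l2) - (w k - l1).
  by rewrite opprB [RHS]addrC addrA subrK.
apply: le_lt_trans (ler_normB _ _) _.
by rewrite [e]splitr addrC ltrD ?hj1 ?hj2.
Qed.

Lemma net_lim_cst (a : V) : net_lim le (fun=> a) a.
Proof.
case: hle => _ _ [j0 _] _ e e0.
by exists j0 => j _; rewrite subrr normr0.
Qed.

Lemma net_lim_cauchy (w : J -> V) (l : V) : net_lim le w l -> net_cauchy w.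
Proof.
case: hle => lerefl _ _ _ hl e e0.
have e20 : 0 < e / 2%:R by rewrite divr_gt0 ?ltr0Sn.
have [j0 hj0] := hl _ e20; exists j0 => j hj.
have -> : w j0 - w j = (w j0 - l) - (w j - l) by rewrite opprB addrA subrK.
apply: le_lt_trans (ler_normB _ _) _.
by rewrite [e]splitr ltrD ?hj0.
Qed.

End Nets.

(* In a complete normed space, every Cauchy net over a directed set converges:
   the sections of the directed set generate a proper filter along which the
   net is Cauchy. *)
Lemma net_cauchy_lim (K : numFieldType) (V : completeNormedModType K)
    (J : Type) (le : J -> J -> Prop) (w : J -> V) :
  directed_set le -> net_cauchy le w -> exists u, net_lim le w u.
Proof.
move=> [lerefl letrans [i0 _] ub] hC.
pose F := filter_from setT (fun j0 => (fun j => le j0 j) : set J).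
have FF : Filter F.
  apply: filter_fromT_filter; first by exists i0.
  move=> i j; have [k [ik jk]] := ub i j; exists k => l /= kl.
  by split; apply: letrans kl.
have PF : ProperFilter F.
  by apply: filter_from_proper => i _; exists i; apply: lerefl.
have : cvg (w @ F)%classic.
  apply/cauchy_cvgP/cauchyP => eps eps0.
  have [j0 hj0] := hC eps eps0.
  exists (w j0); exists j0 => // j /= hj.
  by rewrite -ball_normE /=; apply: hj0.
move=> /cvgrPdistC_lt hl; exists (lim (w @ F)%classic) => eps eps0.
have [j0 _ hj0] := hl eps eps0.
by exists j0 => j hj; apply: (hj0 j).
Qed.

Section BanachAlgebra.
Variables (K : numFieldType) (V : completeNormedModType K).
Variable mul : V -> V -> V.
Hypothesis hA : banach_algebra mul.

Lemma ba_mulr0 u : mul u 0 = 0.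
Proof.
apply/normr0_eq0/eqP; rewrite eq_le normr_ge0 andbT.
by apply: le_trans (ba_normM hA _ _) _; rewrite normr0 mulr0.
Qed.

Lemma ba_mul0r u : mul 0 u = 0.
Proof.
apply/normr0_eq0/eqP; rewrite eq_le normr_ge0 andbT.
by apply: le_trans (ba_normM hA _ _) _; rewrite normr0 mul0r.
Qed.

Lemma ba_mulrB u v w : mul u (v - w) = mul u v - mul u w.
Proof. by rewrite addrC -scaleN1r (ba_linr hA) scaleN1r addrC. Qed.

Lemma ba_mulBr u v w : mul (v - w) u = mul v u - mul w u.
Proof. by rewrite addrC -scaleN1r (ba_linl hA) scaleN1r addrC. Qed.

Lemma ba_mulrZ u (a : K) v : mul u (a *: v) = a *: mul u v.
Proof. by rewrite -[a *: v]addr0 (ba_linr hA) ba_mulr0 addr0. Qed.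

(* Left multiplication is continuous (indeed |a|-Lipschitz), so it maps
   convergent nets to convergent nets. *)
Lemma net_lim_mull (J : Type) (le : J -> J -> Prop) (w : J -> V) (a l : V) :
  net_lim le w l -> net_lim le (fun j => mul a (w j)) (mul a l).
Proof.
move=> hl e e0.
have a1 : 0 < `|a| + 1 by rewrite ltr_wpDl ?normr_ge0.
have [j0 hj0] := hl _ (divr_gt0 e0 a1); exists j0 => j hj.
rewrite -ba_mulrB; apply: le_lt_trans (ba_normM hA _ _) _.
apply: (@le_lt_trans _ _ ((`|a| + 1) * `|w j - l|)).
  by rewrite ler_wpM2r ?normr_ge0 ?lerDl.
by rewrite mulrC -ltr_pdivlMr ?hj0.
Qed.

Definition bounded_below (c : K) (x : V) : Prop :=
  forall z, c * `|z| <= `|mul x z|.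

Lemma bounded_below_unit (c : K) (x : V) :
  0 < c -> (forall y, `|y| = 1 -> c <= `|mul x y|) -> bounded_below c x.
Proof.
move=> c0 hc z; have [->|z0] := eqVneq z 0.
  by rewrite normr0 mulr0 normr_ge0.
have zp : 0 < `|z| by rewrite normr_gt0.
have := hc (`|z|^-1 *: z).
rewrite ba_mulrZ !normrZ ger0_norm ?invr_ge0 ?normr_ge0 // mulVf ?normr_eq0 //.
by move=> /(_ erefl); rewrite ler_pdivlMl // mulrC.
Qed.

Section BoundedBelow.
Variables (c : K) (x : V).
Hypotheses (c0 : 0 < c) (hx : bounded_below c x).

Lemma bounded_below_cancel y z : mul x y = mul x z -> y = z.
Proof.
move=> hyz; apply/eqP; rewrite -subr_eq0 -normr_le0 -(ler_pM2l c0) mulr0.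
by apply: le_trans (hx _) _; rewrite ba_mulrB hyz subrr normr0.
Qed.

Lemma bounded_below_cauchy (J : Type) (le : J -> J -> Prop) (w : J -> V) :
  net_cauchy le (fun j => mul x (w j)) -> net_cauchy le w.
Proof.
move=> hC e e0; have [j0 hj0] := hC _ (mulr_gt0 c0 e0).
exists j0 => j hj; rewrite -(ltr_pM2l c0).
by apply: le_lt_trans (hx _) _; rewrite ba_mulrB hj0.
Qed.

End BoundedBelow.
End BanachAlgebra.

Theorem proposition2p22 (K : numFieldType) (V : completeNormedModType K)
    (mul : V -> V -> V) (hA : banach_algebra mul) (hnu : non_unital mul)
    (x : V) (hx : approx_right_invertible mul x) :
  left_top_divisor_of_zero mul x.
Proof.
move=> c c0; apply: contrapT => hne.
have hbb : bounded_below mul c x.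
  apply: bounded_below_unit => // y y1.
  rewrite real_leNgt ?(gtr0_real c0) ?normr_real //; apply/negP => hlt.
  by apply: hne; exists y.
case: hx => J [le [r [hd hai]]].
pose w j := mul (r j) x.
have hxw : net_lim le (fun j => mul x (w j)) x.
  by under eq_fun do rewrite /w (ba_mulA hA); exact: (hai x).1.
have [u hu] : exists u, net_lim le w u.
  apply: (net_cauchy_lim hd); apply: (bounded_below_cauchy hA c0 hbb).
  exact: net_lim_cauchy hxw.
have hxu : mul x u = x.
  exact: (net_lim_unique hd (net_lim_mull hA x hu) hxw).
have hul y : mul u y = y.
  by apply: (bounded_below_cancel hA c0 hbb); rewrite (ba_mulA hA) hxu.
have hur y : mul y u = y.
  have hz : mul (mul y u - y) x = 0.
    by rewrite (ba_mulBr hA) -(ba_mulA hA) hul subrr.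
  have hz0 : net_lim le (fun j => mul (mul y u - y) (mul x (r j))) 0.
    under eq_fun do rewrite (ba_mulA hA) hz (ba_mul0r hA).
    exact: net_lim_cst.
  have /eqP := net_lim_unique hd (hai (mul y u - y)).2 hz0.
  by rewrite subr_eq0 => /eqP.
by apply: hnu; exists u.
Qed.
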